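(* Let $K$ be a real biquadratic field with quadratic subfields $k_1=\mathbb{Q}(\sqrt{d_1})$, $k_2=\mathbb{Q}(\sqrt{d_2})$, $k_3=\mathbb{Q}(\sqrt{d_1d_2})$, whose fundamental units $\epsilon_1,\epsilon_2,\epsilon_3$ each have norm $+1$. For $i=1,2,3$ let $m_i$ be the squarefree part of the positive integer $\mathrm{Norm}_{k_i/\mathbb{Q}}(\epsilon_i+1)$. Let $E_K$ be the unit group of $K$. Then for integers $n_1,n_2,n_3$, the unit $\epsilon_1^{n_1}\epsilon_2^{n_2}\epsilon_3^{n_3}$ is a square in $E_K$ if and only if $m_1^{n_1}m_2^{n_2}m_3^{n_3}$ equals one of $1,d_1,d_2,d_1d_2$ up to the square of a rational number.
   Context: Here $d_1,d_2$ are integers such that the three fields listed are the distinct real quadratic subfields of $K$. *)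

From HB Require Import structures.
From mathcomp Require Import all_boot all_order all_algebra all_field.
Set Implicit Arguments. Unset Strict Implicit. Unset Printing Implicit Defensive.
Import Order.TTheory GRing.Theory Num.Theory.
Local Open Scope ring_scope.

(* All number fields are realized inside algC; sqrtC d is the positive
   real square root of d when d > 0. *)

Definition Qsqrt (d : int) (x : algC) : Prop :=
  exists a b : rat, x = ratr a + ratr b * sqrtC d%:~R.

Definition biquad (d1 d2 : int) (x : algC) : Prop :=
  exists a b c e : rat,
    x = ratr a + ratr b * sqrtC d1%:~R + ratr c * sqrtC d2%:~R
        + ratr e * (sqrtC d1%:~R * sqrtC d2%:~R).

Definition unit_of (F : algC -> Prop) (x : algC) : Prop :=
  [/\ F x, x != 0, x \in Aint & x^-1 \in Aint].

Definition fundamental_unit (d : int) (eps : algC) : Prop :=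
  [/\ unit_of (Qsqrt d) eps, 1 < eps &
      forall u, unit_of (Qsqrt d) u ->
        exists (s : bool) (n : int), u = (-1) ^+ s * eps ^ n].

Definition qnorm_is (d : int) (x : algC) (N : rat) : Prop :=
  exists a b : rat, x = ratr a + ratr b * sqrtC d%:~R /\ N = a ^+ 2 - d%:~R * b ^+ 2.

Definition squarefree (m : nat) : Prop :=
  (0 < m)%N /\ forall p, prime p -> ~~ (p * p %| m)%N.

Definition sqfree_part (N : rat) (m : nat) : Prop :=
  squarefree m /\ exists k : nat, (0 < k)%N /\ N = (m * k ^ 2)%:R.

Definition rat_square (d : int) : Prop := exists q : rat, q ^+ 2 = d%:~R.

From HB Require Import structures.
From mathcomp Require Import all_boot all_order all_algebra all_field.
From mathcomp Require Import ring.
Set Implicit Arguments. Unset Strict Implicit. Unset Printing Implicit Defensive.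
Import Order.TTheory GRing.Theory Num.Theory.
Local Open Scope ring_scope.

(* Since eps has norm 1, (eps + 1)^2 = eps (eps + eps' + 2) = eps N(eps + 1), so eps_i m_i
   is a square t_i^2 in k_i.  Hence P = eps1^n1 eps2^n2 eps3^n3 and M = m1^n1 m2^n2 m3^n3
   satisfy P M = T^2 with T in K, so P is a square in K exactly when the rational M is.
   Comparing coordinates in the basis 1, sqrt d1, sqrt d2, sqrt d1 sqrt d2 shows that a
   rational number is a square in K exactly when it lies in the square class of 1, d1, d2
   or d1 d2.  Finally a square root of a unit is again an algebraic integer, as is its
   inverse. *)

Lemma rat_square_frac (d : int) (x y : rat) :
  y != 0 -> x ^+ 2 = y ^+ 2 * d%:~R -> rat_square d.
Proof. by move=> y0 h; exists (x / y); rewrite expr_div_n h; field. Qed.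

Lemma Aint_of_exprn n (x : algC) : (0 < n)%N -> x ^+ n \in Aint -> x \in Aint.
Proof.
move=> n_gt0 Axn; apply: (@root_monic_Aint (minCpoly (x ^+ n) \Po 'X^n)).
- by rewrite root_comp hornerXn root_minCpoly.
- rewrite monicE lead_coef_comp ?size_polyXn ?ltnS // lead_coefXn expr1n mulr1.
  exact: minCpoly_monic.
- by apply: polyOver_comp; [exact: Axn | apply/rpredX/polyOverX].
Qed.

Lemma Aint_exprz (x : algC) (n : int) : x \in Aint -> x^-1 \in Aint -> x ^ n \in Aint.
Proof. by move=> Ax Axi; case: n => k; rewrite ?NegzE -?exprz_inv rpredX. Qed.

Section SquareRootCoordinates.
Variable F : numFieldType.

Lemma sqrt_coord_eq0 (d : int) (s : F) a b :
  ~ rat_square d -> s ^+ 2 = d%:~R -> ratr a + ratr b * s = 0 -> a = 0 /\ b = 0.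
Proof.
move=> nsq sqr_s ab0; have [b0|b0] := eqVneq b 0.
  by move: ab0; rewrite b0 rmorph0 mul0r addr0 => /eqP; rewrite fmorph_eq0 => /eqP.
have bs : ratr b * s = - ratr a by apply/eqP; rewrite -addr_eq0 addrC ab0.
have s_rat : s = ratr (- a / b).
  by rewrite fmorph_div rmorphN -bs mulrAC divff ?mul1r ?fmorph_eq0.
case: nsq; exists (- a / b); apply: (@fmorph_inj _ _ (@ratr F)).
by rewrite rmorphXn /= -s_rat sqr_s rmorph_int.
Qed.

Definition bqelt (s1 s2 : F) (a b c e : rat) : F :=
  ratr a + ratr b * s1 + ratr c * s2 + ratr e * (s1 * s2).

Variables (d1 d2 : int) (s1 s2 : F).
Hypotheses (nsq1 : ~ rat_square d1) (nsq2 : ~ rat_square d2) (nsq3 : ~ rat_square (d1 * d2)).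
Hypotheses (sqr_s1 : s1 ^+ 2 = d1%:~R) (sqr_s2 : s2 ^+ 2 = d2%:~R).

Lemma bqelt_eq0 a b c e :
  (bqelt s1 s2 a b c e == 0) = [&& a == 0, b == 0, c == 0 & e == 0].
Proof.
apply/idP/idP => [/eqP abce0|/and4P[/eqP-> /eqP-> /eqP-> /eqP->]]; last first.
  by rewrite /bqelt !rmorph0 !mul0r !addr0.
pose p := a * c - b * e * d1%:~R; pose q := b * c - a * e.
pose D := c ^+ 2 - e ^+ 2 * d1%:~R.
(* Multiplying by the conjugate [c - e s1] of the coefficient of [s2] eliminates [s1 s2]. *)
have pqD0 : ratr p + ratr q * s1 + ratr D * s2 = 0.
  rewrite -(mulr0 (ratr c - ratr e * s1)) -abce0 /bqelt /p /q /D; ring: sqr_s1.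
have D0 : D = 0.
  have [//|D0] := eqVneq D 0; exfalso.
  pose y := p ^+ 2 + q ^+ 2 * d1%:~R - D ^+ 2 * d2%:~R.
  have [y0 pq0] : y = 0 /\ 2 * p * q = 0.
    apply: (sqrt_coord_eq0 nsq1 sqr_s1).
    have Ds2 : ratr D * s2 = - (ratr p + ratr q * s1).
      by apply/eqP; rewrite -addr_eq0 addrC pqD0.
    rewrite -(subrr ((ratr D * s2) ^+ 2)) {1}Ds2 sqrrN /y; ring: sqr_s1 sqr_s2.
  move/eqP: pq0; rewrite !mulf_eq0 /= => /orP[/eqP p0|/eqP q0].
  - case: nsq3; apply: (@rat_square_frac _ (q * d1%:~R) D D0).
    move/eqP: y0; rewrite /y p0 subr_eq0 => /eqP y0.
    by rewrite (_ : (d1 * d2)%:~R = d1%:~R * d2%:~R) ?intrM // mulrCA -y0; ring.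
  - case: nsq2; apply: (@rat_square_frac _ p D D0).
    by move/eqP: y0; rewrite /y q0 subr_eq0 => /eqP <-; ring.
have e0 : e = 0.
  have [//|e0] := eqVneq e 0; case: nsq1; apply: (@rat_square_frac _ c e e0).
  by apply/eqP; rewrite -subr_eq0 -D0.
move: D0; rewrite /D e0 expr0n /= mul0r subr0 => /eqP; rewrite expf_eq0 /= => /eqP c0.
move: abce0; rewrite /bqelt e0 c0 !rmorph0 !mul0r !addr0 => /(sqrt_coord_eq0 nsq1 sqr_s1).
by case=> -> ->; rewrite !eqxx.
Qed.

End SquareRootCoordinates.

Lemma nonsquare_neq0 (d : int) : ~ rat_square d -> d != 0.
Proof. by move=> nsq; apply/eqP => d0; apply: nsq; exists 0; rewrite d0 expr0n. Qed.

Definition biquad_sq_class (d1 d2 : int) (r : rat) : Prop :=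
  exists c : int, c \in [:: 1; d1; d2; d1 * d2] /\
    exists q : rat, q != 0 /\ r = c%:~R * q ^+ 2.

Section Biquadratic.
Variables d1 d2 : int.
Hypotheses (nsq1 : ~ rat_square d1) (nsq2 : ~ rat_square d2) (nsq3 : ~ rat_square (d1 * d2)).

Local Notation s1 := (sqrtC d1%:~R : algC).
Local Notation s2 := (sqrtC d2%:~R : algC).
Local Notation K := (biquad d1 d2).

Let sqr_s1 : s1 ^+ 2 = d1%:~R := sqrtCK _.
Let sqr_s2 : s2 ^+ 2 = d2%:~R := sqrtCK _.

Lemma biquad_rat r : K (ratr r).
Proof. by exists r, 0, 0, 0; rewrite !rmorph0 !mul0r !addr0. Qed.

Lemma biquad1 : K 1.
Proof. by rewrite -(rmorph1 (@ratr algC)); apply: biquad_rat. Qed.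

Lemma biquad_Qsqrt1 x : Qsqrt d1 x -> K x.
Proof. by move=> [a [b ->]]; exists a, b, 0, 0; rewrite !rmorph0 !mul0r !addr0. Qed.

Lemma biquad_Qsqrt2 x : Qsqrt d2 x -> K x.
Proof. by move=> [a [b ->]]; exists a, 0, b, 0; rewrite !rmorph0 !mul0r !addr0. Qed.

Lemma biquad_Qsqrt12 x : 0 <= d1 -> 0 <= d2 -> Qsqrt (d1 * d2) x -> K x.
Proof.
move=> d1_ge0 d2_ge0 [a [b ->]]; exists a, 0, 0, b.
by rewrite intrM sqrtCM ?nnegrE ?ler0z // !rmorph0 !mul0r !addr0.
Qed.

Lemma biquad_mul x y : K x -> K y -> K (x * y).
Proof.
move=> [a [b [c [e ->]]]] [a' [b' [c' [e' ->]]]].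
exists (a * a' + b * b' * d1%:~R + c * c' * d2%:~R + e * e' * d1%:~R * d2%:~R),
  (a * b' + b * a' + (c * e' + e * c') * d2%:~R),
  (a * c' + c * a' + (b * e' + e * b') * d1%:~R),
  (a * e' + e * a' + b * c' + c * b').
ring: sqr_s1 sqr_s2.
Qed.

Lemma biquad_inv x : K x -> K x^-1.
Proof.
have [->|x0] := eqVneq x 0; first by rewrite invr0.
move=> [a [b [c [e Dx]]]].
have Kbq a' b' c' e' : K (bqelt s1 s2 a' b' c' e') by exists a', b', c', e'.
pose g0 := a ^+ 2 + b ^+ 2 * d1%:~R - d2%:~R * (c ^+ 2 + e ^+ 2 * d1%:~R).
pose g1 := 2 * a * b - 2 * d2%:~R * c * e.
pose n := g0 ^+ 2 - g1 ^+ 2 * d1%:~R.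
pose x' := bqelt s1 s2 a (- b) c (- e) * bqelt s1 s2 a b (- c) (- e)
  * bqelt s1 s2 a (- b) (- c) e.
(* [n] is the norm of [x] over Q and [x'] the product of the other three conjugates of [x]. *)
have xx' : x * x' = ratr n.
  by rewrite Dx /x' /n /g0 /g1 /bqelt !rmorphN; ring: sqr_s1 sqr_s2.
have n0 : n != 0.
  apply: contra_neq x0 => n0; apply/eqP; move: xx'; rewrite n0 rmorph0 => /eqP.
  rewrite !mulf_eq0 Dx -/(bqelt _ _ a b c e).
  by rewrite !(bqelt_eq0 nsq1 nsq2 nsq3 sqr_s1 sqr_s2) !oppr_eq0 !orbb.
have -> : x^-1 = x' * ratr n^-1.
  by apply: (mulfI x0); rewrite mulrV ?unitfE // mulrA xx' fmorphV divff ?fmorph_eq0.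
by apply: biquad_mul; [apply: biquad_mul; [apply: biquad_mul|]|apply: biquad_rat]; apply: Kbq.
Qed.

Lemma biquad_exprz x (n : int) : K x -> K (x ^ n).
Proof.
move=> Kx; have Kxn k : K (x ^+ k).
  by elim: k => [|k IHk]; [rewrite expr0; apply: biquad1 | rewrite exprS; apply: biquad_mul].
by case: n => k; [apply: Kxn | apply/biquad_inv/Kxn].
Qed.

Lemma biquad_sqrt_class c : c \in [:: 1; d1; d2; d1 * d2] ->
  exists sc, [/\ K sc, sc != 0 & sc ^+ 2 = c%:~R].
Proof.
have s_neq0 d : ~ rat_square d -> sqrtC d%:~R != 0 :> algC.
  by move=> nsq; rewrite sqrtC_eq0 intr_eq0 nonsquare_neq0.
rewrite !inE => /or4P[] /eqP ->.
- by exists 1; split; [apply: biquad1 | apply: oner_neq0 | apply: expr1n].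
- by exists s1; split=> //; [exists 0, 1, 0, 0; ring | apply: s_neq0].
- by exists s2; split=> //; [exists 0, 0, 1, 0; ring | apply: s_neq0].
exists (s1 * s2); split; first by exists 0, 0, 0, 1; ring.
  by rewrite mulf_neq0 ?s_neq0.
by rewrite exprMn sqr_s1 sqr_s2 intrM.
Qed.

Lemma biquad_sqr_coords a b c e r : bqelt s1 s2 a b c e ^+ 2 = ratr r ->
  [/\ r = a ^+ 2 + b ^+ 2 * d1%:~R + c ^+ 2 * d2%:~R + e ^+ 2 * d1%:~R * d2%:~R,
      a * b + c * e * d2%:~R = 0, a * c + b * e * d1%:~R = 0 & a * e + b * c = 0].
Proof.
move=> sqr_w.
pose r0 := a ^+ 2 + b ^+ 2 * d1%:~R + c ^+ 2 * d2%:~R + e ^+ 2 * d1%:~R * d2%:~R - r.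
pose r1 := 2 * (a * b + c * e * d2%:~R); pose r2 := 2 * (a * c + b * e * d1%:~R).
pose r3 := 2 * (a * e + b * c).
have : bqelt s1 s2 r0 r1 r2 r3 == 0.
  by rewrite -(subrr (ratr r)) -{1}sqr_w /bqelt /r0 /r1 /r2 /r3; apply/eqP; ring: sqr_s1 sqr_s2.
rewrite (bqelt_eq0 nsq1 nsq2 nsq3 sqr_s1 sqr_s2) /r0 /r1 /r2 /r3 !mulf_eq0 /= subr_eq0.
by case/and4P=> /eqP-> /eqP-> /eqP-> /eqP->.
Qed.

Lemma biquad_sqr_coords_single (a b c e : rat) :
  a * b + c * e * d2%:~R = 0 -> a * c + b * e * d1%:~R = 0 -> a * e + b * c = 0 ->
  [\/ [/\ b = 0, c = 0 & e = 0], [/\ a = 0, c = 0 & e = 0],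
      [/\ a = 0, b = 0 & e = 0] | [/\ a = 0, b = 0 & c = 0]].
Proof.
have d1_neq0 : d1%:~R != 0 :> rat by rewrite intr_eq0 nonsquare_neq0.
have d2_neq0 : d2%:~R != 0 :> rat by rewrite intr_eq0 nonsquare_neq0.
have [-> | a0] := eqVneq a 0; rewrite ?mul0r ?add0r => h1 h2 h3.
  have [b0 | b0] := eqVneq b 0.
    have [c0 | c0] := eqVneq c 0; first by constructor 4.
    by move/eqP: h1; rewrite !mulf_eq0 (negPf c0) (negPf d2_neq0) orbF => /eqP; constructor 3.
  move/eqP: h2; move/eqP: h3; rewrite !mulf_eq0 (negPf b0) (negPf d1_neq0) /= orbF.
  by move=> /eqP c0 /eqP e0; constructor 2.
have a2c2 : a ^+ 2 - c ^+ 2 * d2%:~R != 0.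
  apply/eqP => a2c2; apply: nsq2; have [c0 | c0] := eqVneq c 0.
    by move/eqP: a2c2; rewrite c0 expr0n mul0r subr0 sqrf_eq0 (negPf a0).
  by apply: (@rat_square_frac _ a c c0); apply/eqP; rewrite -subr_eq0 a2c2.
have /eqP : b * (a ^+ 2 - c ^+ 2 * d2%:~R) = 0.
  transitivity (a * (a * b + c * e * d2%:~R) - c * d2%:~R * (a * e + b * c)); first ring.
  by rewrite h1 h3 !mulr0 subr0.
rewrite mulf_eq0 (negPf a2c2) orbF => /eqP b0.
move/eqP: h2; move/eqP: h3; rewrite b0 !mul0r !addr0 !mulf_eq0 (negPf a0) /=.
by move=> /eqP e0 /eqP c0; constructor 1.
Qed.

Lemma biquad_sqr_rat w r : K w -> w ^+ 2 = ratr r -> r != 0 -> biquad_sq_class d1 d2 r.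
Proof.
move=> [a [b [c [e ->]]]] /biquad_sqr_coords[Er h1 h2 h3] r0.
have sq_class (c' : int) q : c' \in [:: 1; d1; d2; d1 * d2] -> r = c'%:~R * q ^+ 2 ->
    biquad_sq_class d1 d2 r.
  move=> c'_in Erq; exists c'; split=> //; exists q; split=> //.
  by apply: contra_neq r0 => q0; rewrite Erq q0 expr0n mulr0.
move: Er; have [] := biquad_sqr_coords_single h1 h2 h3; case=> -> -> -> Er.
- by apply: (sq_class 1 a); rewrite ?inE ?eqxx // Er; ring.
- by apply: (sq_class d1 b); rewrite ?inE ?eqxx ?orbT // Er; ring.
- by apply: (sq_class d2 c); rewrite ?inE ?eqxx ?orbT // Er; ring.
- by apply: (sq_class (d1 * d2) e); rewrite ?inE ?eqxx ?orbT // Er intrM; ring.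
Qed.

Lemma biquad_unit_sqrP (P T : algC) (M : rat) :
  P \in Aint -> P^-1 \in Aint -> K T -> T != 0 -> P * ratr M = T ^+ 2 ->
  (exists u, unit_of K u /\ P = u ^+ 2) <-> biquad_sq_class d1 d2 M.
Proof.
move=> AP APi KT T0 PMT.
have M0 : M != 0.
  by apply: contra_neq T0 => M0; apply/eqP; rewrite -sqrf_eq0 -PMT M0 rmorph0 mulr0.
split=> [[u [[Ku u0 _ _] Pu]] | [c [c_in [q [q0 Mq]]]]].
  apply: (@biquad_sqr_rat (T / u)) => //; first exact: biquad_mul KT (biquad_inv Ku).
  by rewrite expr_div_n -PMT Pu [_ * ratr M]mulrC mulfK // sqrf_eq0.
have [sc [Ksc sc0 sqr_sc]] := biquad_sqrt_class c_in.
have scq0 : sc * ratr q != 0 by rewrite mulf_neq0 ?fmorph_eq0.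
pose u := T / (sc * ratr q).
have Pu : P = u ^+ 2.
  apply: (mulIf (_ : ratr M != 0)); first by rewrite fmorph_eq0.
  rewrite PMT /u expr_div_n exprMn sqr_sc Mq rmorphM rmorph_int rmorphXn mulfVK //.
  by rewrite -sqr_sc -exprMn sqrf_eq0.
exists u; split=> //; split.
- exact: biquad_mul KT (biquad_inv (biquad_mul Ksc (biquad_rat q))).
- by rewrite mulf_neq0 ?invr_eq0.
- by apply: (@Aint_of_exprn 2) => //; rewrite -Pu.
- by apply: (@Aint_of_exprn 2) => //; rewrite exprVn -Pu.
Qed.

End Biquadratic.

Lemma norm1_sqr_succ (d : int) (eps : algC) (N : rat) :
  ~ rat_square d -> qnorm_is d eps 1 -> qnorm_is d (eps + 1) N ->
  (eps + 1) ^+ 2 = eps * ratr N.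
Proof.
move=> nsq [a [b [-> ab1]]] [a' [b' [Da' ->]]].
have sqr_s : sqrtC d%:~R ^+ 2 = d%:~R :> algC := sqrtCK _.
have [/eqP + /eqP] : a + 1 - a' = 0 /\ b - b' = 0.
  apply: (sqrt_coord_eq0 nsq sqr_s).
  by rewrite -(subrr (ratr a' + ratr b' * sqrtC d%:~R)) -{1}Da'; ring.
rewrite !subr_eq0 => /eqP <- /eqP <-.
have {}ab1 : a ^+ 2 = 1 + d%:~R * b ^+ 2 by apply/eqP; rewrite -subr_eq -ab1.
have ratr_ab1 : ratr (a ^+ 2) = ratr (1 + d%:~R * b ^+ 2) :> algC by rewrite ab1.
ring: sqr_s ratr_ab1.
Qed.

Lemma norm1_unit_mul_sqr (d : int) (eps : algC) (N : rat) (m : nat) :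
  ~ rat_square d -> eps != 0 -> qnorm_is d eps 1 -> qnorm_is d (eps + 1) N ->
  sqfree_part N m -> exists t, [/\ Qsqrt d t, t != 0 & eps * m%:R = t ^+ 2].
Proof.
move=> nsq eps0 hn hN [[m_gt0 _] [k [k_gt0 Nmk]]].
have k0 : k%:R != 0 :> algC by rewrite pnatr_eq0 -lt0n.
have ratrN : ratr N = m%:R * k%:R ^+ 2 :> algC by rewrite Nmk rmorph_nat natrM natrX.
have sqr_succ := norm1_sqr_succ nsq hn hN.
exists ((eps + 1) / k%:R); split.
- have [a [b [-> _]]] := hN.
  by exists (a / k%:R), (b / k%:R); rewrite !fmorph_div rmorph_nat; field.
- rewrite mulf_neq0 ?invr_eq0 // -sqrf_eq0 sqr_succ ratrN.
  by rewrite !mulf_neq0 ?expf_neq0 // pnatr_eq0 -lt0n.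
- by rewrite expr_div_n sqr_succ ratrN mulrA mulfK // expf_neq0.
Qed.

Lemma exprzM_sqr (F : fieldType) (x y t : F) (n : int) :
  x * y = t ^+ 2 -> x ^ n * y ^ n = (t ^ n) ^+ 2.
Proof. by move=> xyt; rewrite -expfzMl xyt -[t ^+ 2]/(t ^ 2%:Z) exprzAC. Qed.

Theorem proposition5p1 (d1 d2 : int)
  (hd1 : 0 < d1) (hd2 : 0 < d2)
  (nsq1 : ~ rat_square d1) (nsq2 : ~ rat_square d2) (nsq3 : ~ rat_square (d1 * d2))
  (eps1 eps2 eps3 : algC)
  (he1 : fundamental_unit d1 eps1) (he2 : fundamental_unit d2 eps2)
  (he3 : fundamental_unit (d1 * d2) eps3)
  (hn1 : qnorm_is d1 eps1 1) (hn2 : qnorm_is d2 eps2 1) (hn3 : qnorm_is (d1 * d2) eps3 1)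
  (N1 N2 N3 : rat)
  (hN1 : qnorm_is d1 (eps1 + 1) N1) (hN2 : qnorm_is d2 (eps2 + 1) N2)
  (hN3 : qnorm_is (d1 * d2) (eps3 + 1) N3)
  (m1 m2 m3 : nat)
  (hm1 : sqfree_part N1 m1) (hm2 : sqfree_part N2 m2) (hm3 : sqfree_part N3 m3) :
  forall n1 n2 n3 : int,
    (exists u : algC, unit_of (biquad d1 d2) u /\
       eps1 ^ n1 * eps2 ^ n2 * eps3 ^ n3 = u ^+ 2)
    <->
    (exists c : int, c \in [:: 1; d1; d2; d1 * d2] /\
       exists q : rat, q != 0 /\
         (m1%:R : rat) ^ n1 * (m2%:R : rat) ^ n2 * (m3%:R : rat) ^ n3 = c%:~R * q ^+ 2).
Proof.
move=> n1 n2 n3.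
have [[_ e1_neq0 Ae1 Ae1'] _ _] := he1.
have [[_ e2_neq0 Ae2 Ae2'] _ _] := he2.
have [[_ e3_neq0 Ae3 Ae3'] _ _] := he3.
have [t1 [Qt1 t1_neq0 Et1]] := norm1_unit_mul_sqr nsq1 e1_neq0 hn1 hN1 hm1.
have [t2 [Qt2 t2_neq0 Et2]] := norm1_unit_mul_sqr nsq2 e2_neq0 hn2 hN2 hm2.
have [t3 [Qt3 t3_neq0 Et3]] := norm1_unit_mul_sqr nsq3 e3_neq0 hn3 hN3 hm3.
have Kt1 : biquad d1 d2 t1 by apply: biquad_Qsqrt1.
have Kt2 : biquad d1 d2 t2 by apply: biquad_Qsqrt2.
have Kt3 : biquad d1 d2 t3 by apply: biquad_Qsqrt12 (ltW hd1) (ltW hd2) _.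
apply: (biquad_unit_sqrP nsq1 nsq2 nsq3 (T := t1 ^ n1 * t2 ^ n2 * t3 ^ n3)).
- by rewrite !rpredM ?Aint_exprz.
- by rewrite !invfM !invr_expz !rpredM ?Aint_exprz.
- by apply: biquad_mul; [apply: biquad_mul|]; apply: biquad_exprz.
- by rewrite !mulf_neq0 ?expfz_neq0.
rewrite !rmorphM !fmorphXz !rmorph_nat !exprMn.
by rewrite -(exprzM_sqr n1 Et1) -(exprzM_sqr n2 Et2) -(exprzM_sqr n3 Et3); ring.
Qed.
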